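(* Let $(B,G)$ be an admissible pair with $B\in M_{Q_0}(\mathbb Z)$, let $(A,\mathbf x)$ be a $G$-invariant seed in $\mathcal A(B)$ and let $\Omega$ be a $G$-orbit in $Q_0$. Let $(A^{(n)},\mathbf x^{(n)})=\mu^G_\Omega(A,\mathbf x)$, with $A^{(n)}=(a^{(n)}_{ij})$ and $\mathbf x^{(n)}=(x^{(n)}_i)_{i\in Q_0}$. Then $G$ is an automorphism group of $A^{(n)}$, and for all $i\in Q_0$ and $g\in G$: $$a^{(n)}_{i,gi}=0\quad\text{and}\quad x^{(n)}_{gi}=g\,x^{(n)}_i.$$
   Context: $Q_0$ finite; matrices are skew-symmetrizable ($DB$ skew-symmetric for a positive integer diagonal $D$). Mutation of matrices: $\mu_k(M)=(m'_{ij})$ with $m'_{ij}=-m_{ij}$ if $k\in\{i,j\}$, else $m_{ij}+\tfrac12(|m_{ik}|m_{kj}+m_{ik}|m_{kj}|)$; of seeds: $\mu_k(M,\mathbf y)=(\mu_k(M),\mathbf y')$ with $y'_i=y_i$ ($i\ne k$) and $y_ky'_k=\prod_{m_{ik}>0}y_i^{m_{ik}}+\prod_{m_{ik}<0}y_i^{-m_{ik}}$. $\mathcal A(B)=\mathcal A(B,\mathbf u)$ is the cluster algebra with initial seed $(B,\mathbf u)$, $\mathbf u=(u_i)_{i\in Q_0}$; its seeds are those obtained by finite sequences of mutations. A permutation $g$ of $Q_0$ is an automorphism of $S=(s_{ij})$ if $s_{gi,gj}=s_{ij}$ for all $i,j$; a group $G$ of automorphisms is admissible ($(S,G)$ an admissible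 pair) if for distinct $i,j$ in the same $G$-orbit there is no path of length $1$ or $2$ from $i$ to $j$ in the quiver of $S$ ($s_{ij}\le0$ and no $k$ with $s_{ik}>0$, $s_{kj}>0$). $G$ acts on $\mathbb Z[\mathbf u^{\pm1}]$ by $gu_i=u_{gi}$. A seed $(S,\mathbf x)$ is $G$-invariant if $gx_i=x_{gi}$ for all $g,i$ and $(S,G)$ is an admissible pair. The orbit mutation is $\mu^G_\Omega=\prod_{j\in\Omega}\mu_j$ (mutation at all elements of $\Omega$, order irrelevant). *)

From HB Require Import structures.
From mathcomp Require Import all_boot all_order all_algebra all_fingroup.
From mathcomp Require Import fraction generic_quotient.
From mathcomp Require Import mpoly.
Set Implicit Arguments. Unset Strict Implicit. Unset Printing Implicit Defensive.
Import Order.TTheory GRing.Theory Num.Theory.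
Local Open Scope ring_scope.

(* Q_0 = 'I_n.  Matrices over Z are 'M[int]_n. *)

Definition skew_symmetrizable (n : nat) (B : 'M[int]_n) : Prop :=
  exists d : 'I_n -> int, (forall i, 0 < d i) /\
    (forall i j, d i * B i j = - (d j * B j i)).

Definition mut_mx (n : nat) (k : 'I_n) (M : 'M[int]_n) : 'M[int]_n :=
  \matrix_(i, j)
    if (i == k) || (j == k) then - M i j
    else M i j + ((`|M i k| * M k j + M i k * `|M k j|) %/ 2)%Z.

(* ambient field: rational functions in the initial cluster u_i = 'X_i,
   i.e. the fraction field of Z[u_i : i in Q_0] *)
Definition ambient (n : nat) := {fraction {mpoly int[n]}}.

Definition init_cluster (n : nat) : 'I_n -> ambient n :=
  fun i => tofrac ('X_i : {mpoly int[n]}).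

Definition seed (n : nat) := ('M[int]_n * ('I_n -> ambient n))%type.

Definition mut_seed (n : nat) (k : 'I_n) (S : seed n) : seed n :=
  let M := S.1 in let y := S.2 in
  (mut_mx k M,
   fun i => if i == k then
       (\prod_(l | 0 < M l k) y l ^+ absz (M l k)
        + \prod_(l | M l k < 0) y l ^+ absz (M l k)) / y k
     else y i).

(* mutation along a sequence of directions (applied left to right) *)
Definition mut_seq (n : nat) (s : seq 'I_n) (S : seed n) : seed n :=
  foldl (fun S' k => mut_seed k S') S s.

Definition seed_of_cluster_algebra (n : nat) (B : 'M[int]_n) (S : seed n) : Prop :=
  exists s : seq 'I_n, mut_seq s (B, @init_cluster n) = S.

Definition is_mx_aut (n : nat) (S : 'M[int]_n) (g : {perm 'I_n}) : Prop :=
  forall i j, S (g i) (g j) = S i j.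

Definition admissible (n : nat) (S : 'M[int]_n) (G : {group {perm 'I_n}}) : Prop :=
  (forall g, g \in G -> is_mx_aut S g) /\
  (forall (i : 'I_n) (g : {perm 'I_n}), g \in G -> g i != i ->
     S i (g i) <= 0 /\ ~ (exists k, 0 < S i k /\ 0 < S k (g i))).

(* action of a permutation g on Z[u^{+-1}] (and its fraction field):
   the ring automorphism with u_i |-> u_{g i}, applied to numerator and
   denominator of a representative *)
Definition perm_act (n : nat) (g : {perm 'I_n}) (x : ambient n) : ambient n :=
  let r := frac (repr x) in
  tofrac (msym g r.1) / tofrac (msym g r.2).

Definition G_invariant (n : nat) (G : {group {perm 'I_n}}) (S : seed n) : Prop :=
  (forall g i, g \in G -> perm_act g (S.2 i) = S.2 (g i)) /\ admissible S.1 G.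

(* orbit mutation mu^G_Omega = product of mu_j, j in Omega (in the order
   of enum Omega; the order is irrelevant by admissibility) *)
Definition orbit_mut (n : nat) (Omega : {set 'I_n}) (S : seed n) : seed n :=
  mut_seq (enum Omega) S.

From HB Require Import structures.
From mathcomp Require Import all_boot all_order all_algebra all_fingroup.
From mathcomp Require Import fraction generic_quotient.
From mathcomp Require Import mpoly.
From mathcomp Require Import zify ring.
From Stdlib Require Import FunctionalExtensionality.
Set Implicit Arguments. Unset Strict Implicit. Unset Printing Implicit Defensive.
Import Order.TTheory GRing.Theory Num.Theory.
Local Open Scope ring_scope.

(* Admissibility and skew-symmetrizability force A to vanish on Omega x Omega and
   exclude the two-step paths i -> k -> g i.  Hence the mutations at the points
   of Omega commute, and their composite has a closed form: entries with an index
   in Omega change sign, every other entry a_ij gains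
   \sum_(k in Omega) (|a_ik| a_kj + a_ik |a_kj|) / 2, and the variable at k in
   Omega is mutated with respect to the original seed.  This closed form is
   G-equivariant because G permutes Omega, preserves A, and acts on the ambient
   field by ring automorphisms; the vanishing of the new entries a_(i, g i)
   again comes from the absence of two-step paths. *)

Lemma frac_numden_repr (R : idomainType) (x : {fraction R}) :
  x = tofrac \n_(repr x) / tofrac \d_(repr x).
Proof.
have d_neq0 := denom_ratioP (repr x).
apply: (@mulIf _ (tofrac \d_(repr x))); first by rewrite tofrac_eq0.
rewrite mulfVK ?tofrac_eq0 // -{1}[x]reprK; unlock tofrac.
rewrite -[X in X = _]FracField.pi_mul; apply/eqmodP.
by rewrite /= FracField.equivfE /FracField.mulf /= !numden_Ratio
  ?(oner_neq0, mulf_neq0) // !mulr1 mulrC.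
Qed.

Section FracLift.
Variables (R S : idomainType) (f : {rmorphism R -> S}).
Hypothesis f_inj : injective f.

Definition frac_lift (x : {fraction R}) : {fraction S} :=
  tofrac (f \n_(repr x)) / tofrac (f \d_(repr x)).

Lemma frac_lift_div (a b : R) :
  frac_lift (tofrac a / tofrac b) = tofrac (f a) / tofrac (f b).
Proof.
rewrite /frac_lift; have [->|b_neq0] := eqVneq b 0.
  rewrite tofrac0 invr0 mulr0 rmorph0 tofrac0 invr0 mulr0.
  have d_neq0 := denom_ratioP (repr (0 : {fraction R})).
  have /esym/eqP := frac_numden_repr (0 : {fraction R}).
  rewrite mulf_eq0 invr_eq0 !tofrac_eq0 (negbTE d_neq0) orbF => /eqP ->.
  by rewrite rmorph0 tofrac0 mul0r.
set x := tofrac a / tofrac b.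
move: (frac_numden_repr x) (denom_ratioP (repr x)); rewrite {}/x.
move: (repr _) => r /eqP; rewrite eq_sym => + d_neq0.
rewrite eqr_div ?tofrac_eq0 // -!tofracM tofrac_eq => /eqP cross.
apply/eqP; rewrite eqr_div ?tofrac_eq0 ?(raddf_eq0 _ f_inj) //.
by rewrite -!tofracM -!rmorphM cross.
Qed.

Lemma frac_lift_is_zmod_morphism : zmod_morphism frac_lift.
Proof.
move=> u v; rewrite [u]frac_numden_repr [v]frac_numden_repr.
have b_neq0 := denom_ratioP (repr u); have d_neq0 := denom_ratioP (repr v).
set a := \n_(repr u); set b := \d_(repr u); set c := \n_(repr v); set d := \d_(repr v).
rewrite -[X in _ + X]mulNr -tofracN addf_div ?tofrac_eq0 //.
rewrite -!tofracM -tofracD !frac_lift_div rmorphD !rmorphM rmorphN.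
rewrite -[X in _ = _ + X]mulNr -tofracN addf_div ?tofrac_eq0 ?(raddf_eq0 _ f_inj) //.
by rewrite -!tofracM -tofracD.
Qed.

Lemma frac_lift_is_monoid_morphism : monoid_morphism frac_lift.
Proof.
split=> [|u v].
  by rewrite -[1]divr1 -tofrac1 frac_lift_div rmorph1 tofrac1 divr1.
rewrite [u]frac_numden_repr [v]frac_numden_repr mulf_div -!tofracM.
by rewrite !frac_lift_div !rmorphM mulf_div.
Qed.

End FracLift.

Section PermAct.
Variables (n : nat) (g : {perm 'I_n}).

(* [perm_act g] is [frac_lift (msym g)] up to conversion. *)
HB.instance Definition _ := GRing.isZmodMorphism.Build _ _ (perm_act g)
  (frac_lift_is_zmod_morphism (@inj_msym _ _ g)).
HB.instance Definition _ := GRing.isMonoidMorphism.Build _ _ (perm_act g)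
  (frac_lift_is_monoid_morphism (@inj_msym _ _ g)).

End PermAct.

Definition mutation_term (a b : int) : int := ((`|a| * b + a * `|b|) %/ 2)%Z.

Lemma mutation_term_mul2 a b : mutation_term a b * 2 = `|a| * b + a * `|b|.
Proof.
rewrite /mutation_term.
by case: (lerP 0 a) => ha; case: (lerP 0 b) => hb;
  rewrite ?(ger0_norm ha) ?(ltr0_norm ha) ?(ger0_norm hb) ?(ltr0_norm hb); lia.
Qed.

Lemma mutation_term0l b : mutation_term 0 b = 0.
Proof. by rewrite /mutation_term normr0 !mul0r addr0. Qed.

Lemma mutation_term0r a : mutation_term a 0 = 0.
Proof. by rewrite /mutation_term normr0 !mulr0 addr0. Qed.

Lemma mutation_term_eq0 a b :
  ~~ ((0 < a) && (0 < b)) -> ~~ ((a < 0) && (b < 0)) -> mutation_term a b = 0.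
Proof.
have := mutation_term_mul2 a b.
by case: (lerP 0 a) => ha; case: (lerP 0 b) => hb;
  rewrite ?(ger0_norm ha) ?(ltr0_norm ha) ?(ger0_norm hb) ?(ltr0_norm hb) /=; lia.
Qed.

Definition skew_by (n : nat) (d : 'I_n -> int) (M : 'M[int]_n) : Prop :=
  forall i j, d i * M i j = - (d j * M j i).

Section SkewSymmetrizable.
Variables (n : nat) (d : 'I_n -> int).
Hypothesis d_gt0 : forall i, 0 < d i.

Lemma skew_by_gt0 M i j : skew_by d M -> (0 < M i j) = (M j i < 0).
Proof.
move=> /(_ i j) skM; have := d_gt0 i; have := d_gt0 j.
by move=> dj_gt0 di_gt0; apply/idP/idP; nia.
Qed.

Lemma skew_by_diag0 M i : skew_by d M -> M i i = 0.
Proof. by move=> /(_ i i) skM; have := d_gt0 i; nia. Qed.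

Lemma mutation_term_skew i j k (a1 a2 b1 b2 : int) :
  d i * a1 = - (d k * a2) -> d k * b1 = - (d j * b2) ->
  d i * mutation_term a1 b1 = - (d j * mutation_term b2 a2).
Proof.
move=> skA skB; have dk_neq0 : d k * 2 != 0 by rewrite mulf_neq0 ?gt_eqF ?d_gt0.
have abs_a : d i * `|a1| = d k * `|a2|.
  by rewrite -(gtr0_norm (d_gt0 i)) -(gtr0_norm (d_gt0 k)) -!normrM skA normrN.
have abs_b : d k * `|b1| = d j * `|b2|.
  by rewrite -(gtr0_norm (d_gt0 j)) -(gtr0_norm (d_gt0 k)) -!normrM skB normrN.
apply: (mulIf dk_neq0).
transitivity (d k * (d i * (mutation_term a1 b1 * 2))); first by ring.
transitivity (- (d k * (d j * (mutation_term b2 a2 * 2)))); last by ring.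
rewrite !mutation_term_mul2.
transitivity ((d i * `|a1|) * (d k * b1) + (d i * a1) * (d k * `|b1|)); first by ring.
by rewrite abs_a skB skA abs_b; ring.
Qed.

Lemma mut_mx_skew k M : skew_by d M -> skew_by d (mut_mx k M).
Proof.
move=> skM i j; rewrite !mxE [(j == k) || _]orbC; case: ifP => _.
  by rewrite !mulrN skM.
rewrite !mulrDr skM opprD; congr (_ + _).
exact: mutation_term_skew (skM i k) (skM k j).
Qed.

Lemma mut_seq_skew s (S : seed n) : skew_by d S.1 -> skew_by d (mut_seq s S).1.
Proof. by elim: s S => [|k s IHs] S //= skS; apply/IHs/mut_mx_skew. Qed.

End SkewSymmetrizable.

Section SetMutation.
Variable n : nat.
Implicit Types (Om : {set 'I_n}) (M : 'M[int]_n) (y : 'I_n -> ambient n).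

Definition vanishes_on Om M := forall i j, i \in Om -> j \in Om -> M i j = 0.

Definition mut_cluster M y k : ambient n :=
  (\prod_(l | 0 < M l k) y l ^+ absz (M l k)
   + \prod_(l | M l k < 0) y l ^+ absz (M l k)) / y k.

Definition mut_set_mx Om M : 'M[int]_n := \matrix_(i, j)
  if (i \in Om) && (j \in Om) then M i j
  else if (i \in Om) || (j \in Om) then - M i j
  else M i j + \sum_(k in Om) mutation_term (M i k) (M k j).

Definition mut_set_cluster Om M y i : ambient n :=
  if i \in Om then mut_cluster M y i else y i.

Section ExtendSet.
Variables (Om : {set 'I_n}) (M : 'M[int]_n) (k : 'I_n).
Hypotheses (kOm : k \notin Om) (M0 : vanishes_on (k |: Om) M).

Let M0l i : i \in Om -> M i k = 0.
Proof. by move=> iOm; rewrite M0 // !inE ?iOm ?eqxx ?orbT. Qed.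

Let M0r j : j \in Om -> M k j = 0.
Proof. by move=> jOm; rewrite M0 // !inE ?jOm ?eqxx ?orbT. Qed.

Lemma mut_set_mx_col i : mut_set_mx Om M i k = M i k.
Proof.
rewrite mxE (negbTE kOm) andbF orbF; case: ifP => [/M0l->|_]; first by rewrite oppr0.
by rewrite big1 ?addr0 // => l /M0l->; rewrite mutation_term0r.
Qed.

Lemma mut_set_mx_row j : mut_set_mx Om M k j = M k j.
Proof.
rewrite mxE (negbTE kOm) /=; case: ifP => [/M0r->|_]; first by rewrite oppr0.
by rewrite big1 ?addr0 // => l /M0r->; rewrite mutation_term0l.
Qed.

Lemma mut_mx_set : mut_mx k (mut_set_mx Om M) = mut_set_mx (k |: Om) M.
Proof.
apply/matrixP => i j; rewrite [LHS]mxE [RHS]mxE !in_setU1.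
have [->|ik] := eqVneq i k; rewrite /=.
  by rewrite mut_set_mx_row; case: ifP => // kjOm; rewrite M0 ?oppr0 ?in_setU1 ?eqxx.
have [->|jk] := eqVneq j k; rewrite /= ?andbT ?orbT.
  by rewrite mut_set_mx_col; case: ifP => // /M0l->; rewrite oppr0.
rewrite -/(mutation_term _ _) mut_set_mx_col mut_set_mx_row mxE.
case iOm: (i \in Om); case jOm: (j \in Om) => /=.
- by rewrite M0l // mutation_term0l addr0.
- by rewrite M0l // mutation_term0l addr0.
- by rewrite M0r // mutation_term0r addr0.
- by rewrite big_setU1 //= [mutation_term _ _ + _]addrC addrA.
Qed.

Lemma mut_cluster_set y :
  mut_cluster (mut_set_mx Om M) (mut_set_cluster Om M y) k = mut_cluster M y k.
Proof.
have y_out l : M l k != 0 -> mut_set_cluster Om M y l = y l.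
  by rewrite /mut_set_cluster; case: ifP => // /M0l->; rewrite eqxx.
rewrite /mut_cluster {3}/mut_set_cluster (negbTE kOm).
congr ((_ + _) / _); apply: eq_big => l; rewrite mut_set_mx_col // => hl;
  by rewrite y_out //; move: hl; case: ltrgt0P.
Qed.

Lemma mut_seed_set y :
  mut_seed k (mut_set_mx Om M, mut_set_cluster Om M y) =
  (mut_set_mx (k |: Om) M, mut_set_cluster (k |: Om) M y).
Proof.
rewrite /mut_seed /= mut_mx_set -/(mut_cluster _ _ k) mut_cluster_set.
congr pair; apply: functional_extensionality => i.
by rewrite /mut_set_cluster in_setU1; case: eqP => // ->.
Qed.

End ExtendSet.

Lemma mut_seq_set (s : seq 'I_n) M y : uniq s -> vanishes_on [set x in s] M ->
  mut_seq s (M, y) = (mut_set_mx [set x in s] M, mut_set_cluster [set x in s] M y).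
Proof.
elim/last_ind: s => [_ _|s k IHs].
  congr pair; last first.
    by apply: functional_extensionality => i; rewrite /mut_set_cluster inE.
  by apply/matrixP => i j; rewrite mxE !inE /= big_pred0 ?addr0 // => l; rewrite inE.
rewrite rcons_uniq => /andP[ks s_uniq].
have -> : [set x in rcons s k] = k |: [set x in s].
  by apply/setP => x; rewrite !inE mem_rcons in_cons.
move=> M0; rewrite /mut_seq foldl_rcons -/(mut_seq s (M, y)) IHs ?mut_seed_set ?inE //.
by move=> i j iOm jOm; apply: M0; rewrite in_setU1 ?iOm ?jOm orbT.
Qed.

End SetMutation.

Lemma orbit_perm_stable n (G : {group {perm 'I_n}}) i0 g i : g \in G ->
  (g i \in orbit 'P G i0) = (i \in orbit 'P G i0).
Proof. exact: orbit_actr. Qed.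

Section GStableSet.
Variables (n : nat) (G : {group {perm 'I_n}}) (Om : {set 'I_n}) (M : 'M[int]_n).
Hypotheses (OmG : forall g i, g \in G -> (g i \in Om) = (i \in Om))
  (autM : forall g, g \in G -> is_mx_aut M g).

Lemma mut_set_mx_aut g : g \in G -> is_mx_aut (mut_set_mx Om M) g.
Proof.
move=> gG i j; rewrite !mxE !OmG // !autM //; do 2!case: ifP => // _.
congr (_ + _); rewrite (reindex_inj (@perm_inj _ g)) /=.
by apply: eq_big => [k|k _]; rewrite ?OmG ?autM.
Qed.

Lemma perm_act_mut_cluster y g k : g \in G ->
    (forall h i, h \in G -> perm_act h (y i) = y (h i)) ->
  perm_act g (mut_cluster M y k) = mut_cluster M y (g k).
Proof.
move=> gG y_equiv; rewrite /mut_cluster -y_equiv // rmorphM fmorphV rmorphD.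
congr ((_ + _) / _); rewrite rmorph_prod [RHS](reindex_inj (@perm_inj _ g)) /=;
  by apply: eq_big => [l|l _]; rewrite autM // rmorphXn -y_equiv.
Qed.

Lemma mut_set_cluster_equivariant y g i : g \in G ->
    (forall h i, h \in G -> perm_act h (y i) = y (h i)) ->
  mut_set_cluster Om M y (g i) = perm_act g (mut_set_cluster Om M y i).
Proof.
move=> gG y_equiv; rewrite /mut_set_cluster OmG //.
by case: ifP => _; rewrite ?perm_act_mut_cluster ?y_equiv.
Qed.

End GStableSet.

Section AdmissibleOrbit.
Variables (n : nat) (G : {group {perm 'I_n}}) (d : 'I_n -> int) (A : 'M[int]_n).
Hypotheses (d_gt0 : forall i, 0 < d i) (skA : skew_by d A) (admA : admissible A G).

Lemma admissibleV i g : g \in G -> g i != i ->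
  A (g i) i <= 0 /\ ~ (exists k, 0 < A (g i) k /\ 0 < A k i).
Proof.
move=> gG gi_neq; have := admA.2 (g i) (g^-1)%g; rewrite groupV permK.
by apply=> //; rewrite eq_sym.
Qed.

Lemma admissible_mx0 i g : g \in G -> A i (g i) = 0.
Proof.
move=> gG; have [->|gi_neq] := eqVneq (g i) i; first exact: skew_by_diag0.
have [le0 _] := admA.2 i g gG gi_neq; have [le0V _] := admissibleV gG gi_neq.
apply/eqP; rewrite eq_le le0 leNgt -(skew_by_gt0 d_gt0 _ _ skA).
by rewrite -leNgt le0V.
Qed.

Lemma admissible_mutation_term0 i k g : g \in G ->
  mutation_term (A i k) (A k (g i)) = 0.
Proof.
move=> gG; have [->|gi_neq] := eqVneq (g i) i.
  apply: mutation_term_eq0.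
    by rewrite (skew_by_gt0 d_gt0 k i skA); case: ltrgt0P.
  by rewrite -(skew_by_gt0 d_gt0 i k skA); case: ltrgt0P.
have [_ no_path] := admA.2 i g gG gi_neq.
have [_ no_pathV] := admissibleV gG gi_neq.
apply: mutation_term_eq0; apply/negP => /andP[a_sgn b_sgn].
  by apply: no_path; exists k.
apply: no_pathV; exists k.
by rewrite (skew_by_gt0 d_gt0 (g i) k skA) (skew_by_gt0 d_gt0 k i skA).
Qed.

Lemma admissible_vanishes_on_orbit i0 : vanishes_on (orbit 'P G i0) A.
Proof.
move=> _ _ /orbitP[g gG <-] /orbitP[h hG <-].
by have := admissible_mx0 (g i0) (groupM (groupVr gG) hG); rewrite permM permK.
Qed.

Lemma mut_set_mx_orbit0 i0 i g : g \in G -> mut_set_mx (orbit 'P G i0) A i (g i) = 0.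
Proof.
move=> gG; rewrite mxE orbit_perm_stable // andbb orbb admissible_mx0 //.
case: (i \in orbit _ G i0); rewrite ?oppr0 // add0r big1 // => k _.
exact: admissible_mutation_term0.
Qed.

End AdmissibleOrbit.

Theorem mainTheorem11 (n : nat) (B : 'M[int]_n) (G : {group {perm 'I_n}})
    (A : 'M[int]_n) (x : 'I_n -> ambient n) (Omega : {set 'I_n}) :
  skew_symmetrizable B ->
  admissible B G ->
  seed_of_cluster_algebra B (A, x) ->
  G_invariant G (A, x) ->
  (exists i0 : 'I_n, Omega = [set (g : {perm 'I_n}) i0 | g in G]) ->
  let S' := orbit_mut Omega (A, x) in
  (forall g, g \in G -> is_mx_aut S'.1 g) /\
  (forall (i : 'I_n) (g : {perm 'I_n}), g \in G ->
     S'.1 i (g i) = 0 /\ S'.2 (g i) = perm_act g (S'.2 i)).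
Proof.
(* Note that [set g i0 | g in G] is
   [orbit 'P G i0] up to conversion. *)
move=> [d [d_gt0 skB]] _ [s def_Ax] [x_equiv [autA admA]] [i0 ->] S'.
have skA : skew_by d A.
  by have := mut_seq_skew d_gt0 s (S := (B, @init_cluster n)) skB; rewrite def_Ax.
have -> : S' = (mut_set_mx (orbit 'P G i0) A, mut_set_cluster (orbit 'P G i0) A x).
  rewrite /S' /orbit_mut mut_seq_set ?enum_uniq ?set_enum //.
  exact: admissible_vanishes_on_orbit.
split=> [g gG | i g gG].
  exact: mut_set_mx_aut (@orbit_perm_stable _ G i0) autA g gG.
split; first exact: mut_set_mx_orbit0.
exact: mut_set_cluster_equivariant (@orbit_perm_stable _ G i0) autA x g i gG x_equiv.
Qed.
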